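(* Let $g>0$ and let $\hat\tau$ be a $\widehat{\mathbb{Z}}$-tropical type of genus $g$ inducing essential types, with $k_{\hat\tau}=b_1(\Gamma)+2\sum_{v\in V_+}g_v-|V_+|$. Then $k_{\hat\tau}=2g-1$ if and only if $\Gamma$ consists of a single internal vertex of genus $g$ together with some number (possibly zero) of external vertices of genus $0$, each joined to the internal vertex by a single edge.
   Context: A $\widehat{\mathbb{Z}}$-tropical type $\hat\tau$ consists of a graph $\Gamma$ (vertices $V$, edges $E$, $n$ legs) with genera $g_v\ge0$ satisfying $\sum_vg_v+b_1(\Gamma)=g$, degrees $d_v\in\mathbb{Z}$, a partition $V=V_0\sqcup V_+$ into external and internal vertices, and slopes $m_{\vec e}=-m_{\overleftarrow e}\in\widehat{\mathbb{Z}}$ satisfying balancing $d_v=\sum_{e\ni v}m_{\vec e}+\sum_{\text{legs }i\text{ at }v}c_i$ in $\widehat{\mathbb{Z}}$. It induces essential types if every edge joins a vertex of $V_0$ to a vertex of $V_+$ and every $v\in V_+$ has $g_v>0$. *)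

From HB Require Import structures.
From mathcomp Require Import all_boot all_order all_algebra.
Set Implicit Arguments. Unset Strict Implicit. Unset Printing Implicit Defensive.
Import Order.TTheory GRing.Theory Num.Theory.
Local Open Scope ring_scope.

(* A (multi)graph Gamma: finite vertex set V, finite edge set E; every edge e
   carries a chosen orientation src e -> tgt e (loops allowed: src e = tgt e). *)
Section Graph.
Variables (V E : finType) (src tgt : E -> V).

Definition incident (e : E) (v : V) : bool := (src e == v) || (tgt e == v).

Definition adj : rel V := fun u w =>
  [exists e, ((src e == u) && (tgt e == w)) || ((src e == w) && (tgt e == u))].

Definition graph_connected : bool :=
  (0 < #|V|)%N && [forall u, [forall w, connect adj u w]].

Definition betti1 : nat := (#|E| + 1 - #|V|)%N.

(* The slopes/degrees live in a ring Zh
   (Zhat in the paper); m e is the slope of the oriented edge src e -> tgt e,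
   the slope of the reversed orientation being - m e. *)
Definition is_tropical_type (Zh : comNzRingType) (g n : nat)
  (gv : V -> nat) (d : V -> int) (legv : 'I_n -> V) (c : 'I_n -> int)
  (m : E -> Zh) : Prop :=
  [/\ graph_connected,
      (\sum_(v : V) gv v + betti1)%N = g &
      forall v : V,
        (d v)%:~R = \sum_(e | src e == v) m e - \sum_(e | tgt e == v) m e
                    + \sum_(i | legv i == v) (c i)%:~R ].

(* Vp is the set V_+ of internal vertices; V_0 is its complement. *)
Definition induces_essential (Vp : {set V}) (gv : V -> nat) : Prop :=
  (forall e : E, (src e \in Vp) != (tgt e \in Vp)) /\
  (forall v, v \in Vp -> (0 < gv v)%N).

Definition k_tau (Vp : {set V}) (gv : V -> nat) : int :=
  (betti1 + 2 * \sum_(v in Vp) gv v)%N%:Z - (#|Vp|)%:Z.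

Definition star_shaped (g : nat) (Vp : {set V}) (gv : V -> nat) : Prop :=
  exists v0 : V,
    [/\ Vp = [set v0], gv v0 = g,
        forall w, w != v0 -> gv w = 0%N /\ #|[set e | incident e w]| = 1%N &
        forall e, incident e v0 && (src e != tgt e)].

End Graph.

From mathcomp Require Import all_boot all_order all_algebra.
From mathcomp Require Import zify.
Set Implicit Arguments. Unset Strict Implicit. Unset Printing Implicit Defensive.

(* Writing g = S_+ + S_0 + b_1 with S_+ (resp. S_0) the total genus of the
   internal (resp. external) vertices, k = 2g - 1 unfolds to
   2 S_0 + b_1 + |V_+| = 1.  Essentiality makes Gamma bipartite between V_0 and
   V_+, so V_+ = {} would leave no edges and force b_1 = 0 as well; hence
   V_+ = {v0}, b_1 = 0 and all external genera vanish.  Every edge then joins v0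
   to an external vertex, its far end; by connectedness the far-end map is onto
   V \ {v0}, and b_1 = 0 (|E| = |V| - 1) says exactly that it is injective,
   i.e. that every external vertex carries a single edge. *)

Lemma betti1_eq0 (V E : finType) : (betti1 V E == 0)%N = (#|E| < #|V|)%N.
Proof. by rewrite /betti1 subn_eq0 addn1. Qed.

Lemma k_tau_eq_2g_sub1 (V E : finType) (Vp : {set V}) (gv : V -> nat) (g : nat) :
  (\sum_v gv v + betti1 V E = g)%N ->
  (k_tau E Vp gv = (2 * g)%:Z - 1)%R <->
  (betti1 V E + #|Vp| = 1 /\ \sum_(v in ~: Vp) gv v = 0)%N.
Proof.
have split_genus : (\sum_v gv v = \sum_(v in Vp) gv v + \sum_(v in ~: Vp) gv v)%N.
  rewrite (bigID [in Vp]) /=; congr (_ + _)%N.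
  by apply: eq_bigl => v; rewrite inE.
by rewrite /k_tau split_genus => <-; split; lia.
Qed.

Lemma injective_fibers1 (aT rT : finType) (f : aT -> rT) :
  injective f <-> {in [set f x | x in aT], forall y, #|f @^-1: [set y]| = 1%N}.
Proof.
split=> [f_inj _ /imsetP[x1 _ ->] | fib1 x1 x2 f12].
  by apply/eqP/cards1P; exists x1; apply/setP=> x; rewrite !inE (inj_eq f_inj).
have /eqP/cards1P[x0 fib] := fib1 _ (imset_f f (isT : x1 \in aT)).
have : x2 \in f @^-1: [set f x1] by rewrite !inE f12.
have : x1 \in f @^-1: [set f x1] by rewrite !inE.
by rewrite fib !inE => /eqP-> /eqP->.
Qed.

Section Incidence.
Variables (V E : finType) (src tgt : E -> V).

Lemma no_edge_into_empty_side (Vp : {set V}) :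
  (forall e, (src e \in Vp) != (tgt e \in Vp)) -> Vp = set0 -> #|E| = 0%N.
Proof.
by move=> ess Vp0; apply: eq_card0 => e; move: (ess e); rewrite Vp0 !inE.
Qed.

Lemma incident_loopfreeE (e : E) (v : V) :
  incident src tgt e v && (src e != tgt e) = ((src e == v) != (tgt e == v)).
Proof.
rewrite /incident; case: (src e =P v) => [<-|/eqP sv] /=; first by rewrite eq_sym.
by case: (tgt e =P v) => [->|].
Qed.

End Incidence.

Section Star.
Variables (V E : finType) (src tgt : E -> V) (v0 : V).
Hypothesis one_end_at_v0 : forall e, (src e == v0) != (tgt e == v0).

Definition far_end (e : E) : V := if src e == v0 then tgt e else src e.

Lemma far_end_neq e : far_end e != v0.
Proof.
by move: (one_end_at_v0 e); rewrite /far_end; case: (src e =P v0) => [_ | /eqP].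
Qed.

Lemma incident_far_endE e w :
  w != v0 -> incident src tgt e w = (far_end e == w).
Proof.
move=> wv0; move: (one_end_at_v0 e); rewrite /incident /far_end.
case: (src e =P v0) => [-> _ | _ tv0] /=; first by rewrite eq_sym (negPf wv0).
case: (tgt e =P w) => [tw | _]; last by rewrite orbF.
by move: tv0; rewrite tw (negPf wv0).
Qed.

Lemma far_end_image :
  graph_connected src tgt -> [set far_end e | e in E] = [set~ v0].
Proof.
case/andP=> _ /forallP conn; apply/setP=> w; rewrite !inE.
apply/imsetP/idP => [[e _ ->] | wv0]; first exact: far_end_neq.
move/forallP/(_ v0)/connectP: (conn w) => [[|y p] /= path_wv0 last_v0].
  by rewrite last_v0 eqxx in wv0.
case/andP: path_wv0 => /existsP[e /orP[] /andP[/eqP s_e /eqP t_e]] _.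
  exists e => //; apply/esym/eqP.
  by rewrite -incident_far_endE // /incident s_e eqxx.
exists e => //; apply/esym/eqP.
by rewrite -incident_far_endE // /incident t_e eqxx orbT.
Qed.

Lemma star_betti1_eq0 : graph_connected src tgt ->
  betti1 V E = 0%N <->
  (forall w, w != v0 -> #|[set e | incident src tgt e w]| = 1%N).
Proof.
move=> conn; have img := far_end_image conn.
have fibersE w :
    w != v0 -> [set e | incident src tgt e w] = far_end @^-1: [set w].
  by move=> wv0; apply/setP=> e; rewrite !inE incident_far_endE.
have card_img : #|[set far_end e | e in E]|.+1 = #|V|.
  by rewrite img cardsC1 prednK //; apply/card_gt0P; exists v0.
have injE : injective far_end <-> (#|E| < #|V|)%N.
  rewrite -card_img ltnS; split=> [f_inj | le_E]; first by rewrite card_imset.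
  by apply: in2T; apply/imset_injP; rewrite eqn_leq leq_imset_card.
rewrite injective_fibers1 img in injE.
split=> [/eqP b0 w wv0 | fib].
  rewrite (fibersE w wv0); apply: (proj2 injE); last by rewrite !inE.
  by rewrite -betti1_eq0 b0.
apply/eqP; rewrite betti1_eq0; apply/injE => w; rewrite !inE => wv0.
by rewrite -fibersE // fib.
Qed.

End Star.

Theorem lemma3p5p6 (Zh : comNzRingType) (V E : finType) (src tgt : E -> V)
  (n g : nat) (Vp : {set V}) (gv : V -> nat) (d : V -> int)
  (legv : 'I_n -> V) (c : 'I_n -> int) (m : E -> Zh) :
  (0 < g)%N ->
  is_tropical_type src tgt g gv d legv c m ->
  induces_essential src tgt Vp gv ->
  (k_tau E Vp gv = (2 * g)%:Z - 1)%R <-> star_shaped src tgt g Vp gv.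
Proof.
move=> _ [conn genus _] [ess _]; rewrite (k_tau_eq_2g_sub1 _ genus).
split=> [[b_Vp /eqP] | [v0 [-> gv0 ext_star edges]]].
- rewrite sum_nat_eq0 => /forall_inP genus0_off_Vp.
  have b0 : betti1 V E = 0%N.
    case: (posnP #|Vp|) => [/eqP | Vp_gt0]; last by lia.
    rewrite cards_eq0 => /eqP /(no_edge_into_empty_side ess) E0.
    by apply/eqP; rewrite betti1_eq0 E0; case/andP: conn.
  have /cards1P[v0 Vp1] : #|Vp| == 1%N by rewrite -b_Vp b0.
  have ext_genus0 w : w != v0 -> gv w = 0%N.
    by move=> wv0; apply/eqP/genus0_off_Vp; rewrite Vp1 !inE.
  have one_end e : (src e == v0) != (tgt e == v0).
    by move: (ess e); rewrite Vp1 !inE.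
  exists v0; split=> // [|w wv0|e]; last by rewrite incident_loopfreeE.
    by rewrite -genus b0 addn0 (bigD1 v0) //= big1 ?addn0 // => w /ext_genus0.
  by split; [exact: ext_genus0 | exact: (proj1 (star_betti1_eq0 one_end conn))].
- have one_end e : (src e == v0) != (tgt e == v0) by rewrite -incident_loopfreeE.
  split; last first.
    apply/eqP; rewrite sum_nat_eq0; apply/forall_inP => w.
    by rewrite !inE => /ext_star[-> _].
  by rewrite (proj2 (star_betti1_eq0 one_end conn)) ?cards1 // => w /ext_star[].
Qed.
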